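(* The product of $\mathbf{PM}_k$ satisfies, for any $k$-packed matrices $M_1$ and $M_2$, $\mathbf{E}_{M_1} \cdot \mathbf{E}_{M_2} = \mathbf{E}_{\mathrm{ov}(M_1, M_2)}$ and $\mathbf{H}_{M_1} \cdot \mathbf{H}_{M_2} = \mathbf{H}_{\mathrm{un}(M_1, M_2)}$.
   Context: Let $k \geq 1$, $A_k := \{0,1,\dots,k\}$. A $k$-packed matrix of size $n$ is an $n\times n$ matrix with entries in $A_k$ with at least one nonzero entry in each row and column. $\mathbf{PM}_k$ has fundamental basis $(\mathbf{F}_M)$ indexed by $k$-packed matrices and product $\mathbf{F}_{M_1}\cdot\mathbf{F}_{M_2} = \sum_{M \in \mathrm{Sh}_c(M_1,M_2)} \mathbf{F}_M$, where, for sizes $n_1, n_2$, $\mathrm{Sh}_c(M_1,M_2)$ is the set of all matrices obtained by shuffling the columns of $M_1$ with an $n_2 \times n_1$ zero block placed below it, with the columns of $M_2$ with an $n_1 \times n_2$ zero block placed above it. $\mathrm{ov}(M_1,M_2) := \begin{pmatrix} M_1 & 0 \\ 0 & M_2\end{pmatrix}$ and $\mathrm{un}(M_1,M_2) := \begin{pmatrix} 0 & M_1 \\ M_2 & 0 \end{pmatrix}$. Define $\to$ on $k$-packed matrices of size $n$: $M_1 \to M_2$ if there is $i \in [n-1]$ such that, with $s$ the number of $0$ ending the $i$th column of $M_1$ and $p$ the number of $0$ starting its $(i+1)$st column, $s + p \geq n$ and $M_2$ is obtained by exchanging columns $i$ and $i+1$ of $M_1$. $\leq_{\mathrm{M}}$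 is the reflexive and transitive closure of $\to$. The elementary and homogeneous elements are $\mathbf{E}_M := \sum_{M \leq_{\mathrm{M}} M'} \mathbf{F}_{M'}$ and $\mathbf{H}_M := \sum_{M' \leq_{\mathrm{M}} M} \mathbf{F}_{M'}$. *)

From mathcomp Require Import all_boot all_order all_algebra.
Set Implicit Arguments. Unset Strict Implicit. Unset Printing Implicit Defensive.

(* A matrix with entries in A_k = {0,...,k} is a matrix over 'I_k.+1.
   A (possibly not packed) square matrix of any size: a dependent pair. *)
Definition pmat (k : nat) := {n : nat & 'M['I_k.+1]_n}.

Definition psize k (M : pmat k) : nat := tag M.

Definition packedb k n (M : 'M['I_k.+1]_n) : bool :=
  [forall i, exists j, M i j != ord0] && [forall j, exists i, M i j != ord0].

Definition packed k (M : pmat k) : bool := packedb (tagged M).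

(* entry access with nat indices, default 0 out of range *)
Definition mget k n (A : 'M['I_k.+1]_n) (i j : nat) : 'I_k.+1 :=
  match (insub i : option 'I_n), (insub j : option 'I_n) with
  | Some i', Some j' => A i' j'
  | _, _ => ord0
  end.

(* The shuffle of the columns of (M1 over a zero block) with the columns of
   (a zero block over M2), where S is the set of positions receiving the
   columns of M1 (in order). *)
Definition shuffle_mx k n1 n2 (S : {set 'I_(n1 + n2)})
  (M1 : 'M['I_k.+1]_n1) (M2 : 'M['I_k.+1]_n2) : 'M['I_k.+1]_(n1 + n2) :=
  \matrix_(i, j)
    if j \in S then
      (if (i : nat) < n1 then mget M1 i #|[set l in S | (l : nat) < j]| else ord0)
    else
      (if n1 <= i then mget M2 (i - n1) #|[set l in ~: S | (l : nat) < j]| else ord0).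

Definition shc k (M1 M2 : pmat k) : seq (pmat k) :=
  [seq Tagged (fun n => 'M['I_k.+1]_n) (shuffle_mx X (tagged M1) (tagged M2))
  | X <- enum [set X : {set 'I_(psize M1 + psize M2)} | #|X| == psize M1]].

(* Elements of PM_k with nonnegative integer coefficients in the
   fundamental basis (F_M) are represented by multisets (seqs) of
   matrices: the seq s stands for \sum_(M <- s) F_M.  Two such elements are
   equal iff the seqs are permutations of each other (perm_eq). *)
Definition pm_mul k (x y : seq (pmat k)) : seq (pmat k) :=
  flatten (allpairs (@shc k) x y).

Definition ov k (M1 M2 : pmat k) : pmat k :=
  Tagged (fun n => 'M['I_k.+1]_n)
    (block_mx (tagged M1) (const_mx ord0 : 'M_(psize M1, psize M2))
              (const_mx ord0 : 'M_(psize M2, psize M1)) (tagged M2)).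

Definition un k (M1 M2 : pmat k) : pmat k :=
  Tagged (fun n => 'M['I_k.+1]_n)
    (castmx (erefl, addnC (psize M2) (psize M1))
      (block_mx (const_mx ord0 : 'M_(psize M1, psize M2)) (tagged M1)
                (tagged M2) (const_mx ord0 : 'M_(psize M2, psize M1)))).

Definition trail0 k n (M : 'M['I_k.+1]_n) (j : 'I_n) : nat :=
  #|[set r : 'I_n | [forall r' : 'I_n, (r <= r') ==> (M r' j == ord0)]]|.

Definition lead0 k n (M : 'M['I_k.+1]_n) (j : 'I_n) : nat :=
  #|[set r : 'I_n | [forall r' : 'I_n, (r' <= r) ==> (M r' j == ord0)]]|.

(* the relation M1 -> M2 (columns indexed from 0: i and i+1) *)
Definition mstep k n : rel 'M['I_k.+1]_n := fun M1 M2 =>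
  [exists i : 'I_n, exists j : 'I_n,
     [&& (j : nat) == i.+1, n <= trail0 M1 i + lead0 M1 j & M2 == xcol i j M1]].

Definition leM k n (M1 M2 : 'M['I_k.+1]_n) : bool := connect (@mstep k n) M1 M2.

Definition Eel k (M : pmat k) : seq (pmat k) :=
  [seq Tagged (fun n => 'M['I_k.+1]_n) M' | M' <- enum 'M['I_k.+1]_(psize M)
  & leM (tagged M) M'].

Definition Hel k (M : pmat k) : seq (pmat k) :=
  [seq Tagged (fun n => 'M['I_k.+1]_n) M' | M' <- enum 'M['I_k.+1]_(psize M)
  & leM M' (tagged M)].

(* The shuffles of M1 and M2 are the matrices shuffle_mx X A B, X the set of
   positions receiving the columns of A.  A move of a shuffle exchanges two
   adjacent columns: either both come from A (a move of A), both from B (a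
   move of B), or one from each (a change of X only).  Hence the matrices
   above ov(M1, M2) -- the shuffle with X an initial segment -- are exactly
   the shuffles of matrices above M1 and M2: every X is reached from the
   initial segment by moving A-columns to the right past B-columns, and moves
   of M1 and M2 lift to moves inside the two blocks.  Dually, the matrices
   below un(M1, M2) -- X a final segment -- are the shuffles of matrices
   below M1 and M2.  Since the columns of A are nonzero, X can be read off
   the top rows of a shuffle, and then A and B; so each matrix occurs exactly
   once in the product. *)

From mathcomp Require Import all_boot all_order all_algebra perm zify.
Set Implicit Arguments. Unset Strict Implicit. Unset Printing Implicit Defensive.

Lemma connect_ind (T : finType) (e : rel T) (P : T -> Prop) x :
  P x -> (forall y z, P y -> e y z -> P z) -> forall y, connect e x y -> P y.
Proof.
move=> Px stepP y /connectP[p e_p ->].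
by elim: p x Px e_p => //= z p IHp x Px /andP[/(stepP _ _ Px) Pz /(IHp _ Pz)].
Qed.

Lemma connect_ind_r (T : finType) (e : rel T) (P : T -> Prop) y :
  P y -> (forall x z, P z -> e x z -> P x) -> forall x, connect e x y -> P x.
Proof.
move=> Py stepP x cxy; have : connect [rel a b | e b a] y x by rewrite connect_rev.
by apply: (connect_ind (P := P)) => // z x' Pz; apply: stepP.
Qed.

Lemma adjacent_switch n (p : pred 'I_n) (a b : 'I_n) : p a -> ~~ p b -> a < b ->
  exists i j : 'I_n, [/\ j = i.+1 :> nat, p i & ~~ p j].
Proof.
move=> pa npb /subnKC; move: (b - a.+1) => d Eb.
elim: d a pa Eb => [|d IH] a pa Eb; first by exists a, b; rewrite -Eb addn0.
have lt_a1 : a.+1 < n by rewrite (leq_trans _ (ltn_ord b)) // -Eb ltnS leq_addr.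
have [pa1|npa1] := boolP (p (Ordinal lt_a1)); last by exists a, (Ordinal lt_a1).
by apply: IH pa1 _; rewrite /= -Eb addnS.
Qed.

Lemma card_eq_not_subset (T : finType) (X Y : {set T}) :
  #|X| = #|Y| -> X != Y -> exists2 a, a \in X & a \notin Y.
Proof.
move=> cXY neXY; apply/subsetPn; apply: contra neXY => sXY.
by rewrite eqEcard sXY cXY leqnn.
Qed.

Lemma sum_preim_tperm n (f : 'I_n -> nat) (X : {set 'I_n}) (i j : 'I_n) :
  i \in X -> j \notin X ->
  \sum_(l in tperm i j @^-1: X) f l + f i = \sum_(l in X) f l + f j.
Proof.
move=> Xi Xj; have neq_ij : i != j by apply: contraNneq Xj => <-.
have -> : tperm i j @^-1: X = j |: (X :\ i).
  apply/setP => l; rewrite !inE.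
  case: tpermP => [->|->|/eqP/negbTE-> /eqP/negbTE->] //.
  - by rewrite (negbTE Xj) (negbTE neq_ij) eqxx.
  - by rewrite eqxx.
rewrite big_setU1 /=; last by rewrite !inE negb_and Xj orbT.
rewrite (big_setD1 _ Xi) /=.
by rewrite addnAC [f j + _]addnC [RHS]addnAC.
Qed.

(* In [shuffle_mx X M1 M2], a column [j \in X] is the column [rk X j] of [M1]. *)
Definition rk n (S : {set 'I_n}) (m : nat) : nat := #|[set l in S | (l : nat) < m]|.

Definition iset n (m p : nat) : {set 'I_n} := [set l : 'I_n | m <= l < m + p].

Section Rank.
Variable n : nat.
Implicit Types (S : {set 'I_n}) (i j c : 'I_n).

Lemma rk_small S m : (forall l, l \in S -> m <= l) -> rk S m = 0.
Proof.
move=> geS; apply/eqP; rewrite cards_eq0; apply/eqP/setP => l; rewrite !inE.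
by apply/negbTE; rewrite negb_and -leqNgt; case: (boolP (l \in S)) => // /geS->; rewrite orbT.
Qed.

Lemma rkS S c : rk S c.+1 = rk S c + (c \in S).
Proof.
have split_lt (l : 'I_n) : (l < c.+1) = (l == c) || (l < c).
  by rewrite ltnS leq_eqVlt.
have [Sc|nSc] := boolP (c \in S).
  rewrite /rk (_ : [set l in S | _ < c.+1] = c |: [set l in S | (l : nat) < c]).
    by rewrite cardsU1 !inE ltnn andbF addn1.
  by apply/setP => l; rewrite !inE split_lt; case: (eqVneq l c) => [->|]; rewrite ?Sc.
rewrite addn0; apply: eq_card => l; rewrite !inE split_lt.
by case: (eqVneq l c) => [->|]; rewrite ?(negbTE nSc).
Qed.

Lemma leq_rk S m m' : m <= m' -> rk S m <= rk S m'.
Proof.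
move=> le_mm'; apply/subset_leq_card/subsetP => l; rewrite !inE.
by case/andP=> -> /leq_trans->.
Qed.

Lemma rk_card S : rk S n = #|S|.
Proof. by apply: eq_card => l; rewrite !inE ltn_ord andbT. Qed.

Lemma rk_lt_card S c : c \in S -> rk S c < #|S|.
Proof. by move=> Sc; rewrite -rk_card (leq_trans _ (leq_rk S (ltn_ord c))) // rkS Sc addn1. Qed.

Lemma ltn_rk S i j : i \in S -> i < j -> rk S i < rk S j.
Proof. by move=> Si lt_ij; rewrite (leq_trans _ (leq_rk S lt_ij)) // rkS Si addn1. Qed.

Lemma rk_inj S : {in S &, injective (fun c => rk S c)}.
Proof.
move=> i j Si Sj eq_rk; apply: val_inj; case: (ltngtP i j) => // [lt_ij|lt_ji].
  by have := ltn_rk Si lt_ij; rewrite eq_rk ltnn.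
by have := ltn_rk Sj lt_ji; rewrite eq_rk ltnn.
Qed.

Lemma rk_onto S m : m < #|S| -> exists2 c, c \in S & rk S c = m.
Proof.
rewrite -rk_card.
suff : forall p, p <= n -> m < rk S p -> exists2 c, c \in S & rk S c = m by apply.
elim=> [|p IHp] le_pn; first by rewrite rk_small.
rewrite (rkS S (Ordinal le_pn)) /=.
have [lt_m|] := ltnP m (rk S p); first by move=> _; exact: IHp (ltnW le_pn) lt_m.
case: (boolP (_ \in S)) => [Sp|_] ge_m; last by rewrite addn0 ltnNge ge_m.
rewrite addn1 ltnS => le_m; exists (Ordinal le_pn) => //.
by apply/eqP; rewrite eqn_leq le_m ge_m.
Qed.

Lemma rk_preimset S (f : 'I_n -> 'I_n) m :
  injective f -> (forall l, (f l < m) = (l < m)) -> rk (f @^-1: S) m = rk S m.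
Proof.
move=> inj_f f_lt; rewrite /rk -[RHS](card_preimset _ inj_f).
by apply: eq_card => l; rewrite !inE f_lt.
Qed.

Lemma rk_iset m p b : b <= p -> m + p <= n -> rk (iset n m p) (m + b) = b.
Proof.
move=> + le_n; elim: b => [_|b IHb lt_bp].
  by rewrite addn0 rk_small // => l; rewrite inE => /andP[].
have lt_mbn : m + b < n by rewrite (leq_trans _ le_n) // ltn_add2l.
rewrite addnS (rkS _ (Ordinal lt_mbn)) IHb ?(ltnW lt_bp) // inE /=.
by rewrite leq_addr ltn_add2l lt_bp addn1.
Qed.

Lemma card_iset m p : m + p <= n -> #|iset n m p| = p.
Proof.
move=> le_n; rewrite -[RHS](rk_iset (leqnn p) le_n).
by apply: eq_card => l; rewrite !inE andbC; case: (_ < m + p); rewrite ?andbT.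
Qed.

Lemma rk_tperm S i j c m (a a' r : 'I_m) :
  j = i.+1 :> nat -> i \in S -> j \in S -> c \in S ->
  rk S i = a -> a' = a.+1 :> nat -> rk S c = r -> rk S (tperm i j c) = tperm a a' r.
Proof.
move=> Ej Si Sj Sc Ea Ea' Er.
have Ej' : rk S j = a' by rewrite Ej rkS Si Ea Ea' addn1.
case: tpermP => [Eci|Ecj|nci ncj].
- by rewrite Eci Ea in Er; rewrite (val_inj Er) tpermL Ej'.
- by rewrite Ecj Ej' in Er; rewrite (val_inj Er) tpermR Ea.
rewrite tpermD // -val_eqE /= -Er -?Ea -?Ej'; apply/negP => /eqP/rk_inj.
  by move=> /(_ Si Sc) ci; apply: nci; rewrite ci.
by move=> /(_ Sj Sc) cj; apply: ncj; rewrite cj.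
Qed.

Lemma rk_preim_tperm S i j c : j = i.+1 :> nat -> (i \in S) != (j \in S) ->
  tperm i j c \in S -> rk (tperm i j @^-1: S) c = rk S (tperm i j c).
Proof.
move=> Ej neS; have inj_t := @perm_inj _ (tperm i j).
have t_lt (m : nat) : m != j -> forall l, (tperm i j l < m) = (l < m).
  by move=> njm l; case: tpermP => [->|->|//]; move: njm; rewrite Ej; lia.
case: tpermP => [->|->|_ /eqP ncj] Sc.
- have nSi : i \notin S by move: neS; rewrite Sc; case: (i \in S).
  by rewrite Ej rkS (negbTE nSi) addn0 rk_preimset //; apply: t_lt; rewrite Ej; lia.
- have nSj : j \notin S by move: neS; rewrite Sc; case: (j \in S).
  by rewrite Ej rkS inE tpermL (negbTE nSj) addn0 rk_preimset //; apply: t_lt; rewrite Ej; lia.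
by rewrite rk_preimset //; apply: t_lt.
Qed.

End Rank.

Lemma tperm_mem n (S : {set 'I_n}) i j c :
  (i \in S) = (j \in S) -> (tperm i j c \in S) = (c \in S).
Proof. by case: tpermP => [->|->|] // ->. Qed.

Section Columns.
Variable k : nat.
Local Notation Mx n := 'M['I_k.+1]_n.

Definition col_before n (M : Mx n) (i j : 'I_n) :=
  forall r r' : 'I_n, M r i != ord0 -> M r' j != ord0 -> r < r'.

Lemma col_beforeP n (M : Mx n) (i j : 'I_n) :
  n <= trail0 M i + lead0 M j <-> col_before M i j.
Proof.
rewrite /trail0 /lead0; set U := [set r | _]; set L := [set r | _]; split.
- move=> le_n r r' Mri Mr'j; rewrite ltnNge; apply/negP => le_r'r.
  have UL0 : U :&: L = set0.
    apply/setP => x; rewrite !inE; apply/negP => /andP[/forallP/(_ r) Ux /forallP/(_ r') Lx].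
    have [le_xr|lt_rx] := leqP x r; first by move: Ux; rewrite le_xr (negbTE Mri).
    by move: Lx; rewrite (leq_trans le_r'r (ltnW lt_rx)) (negbTE Mr'j).
  have UL_r : U :|: L \subset [set~ r].
    apply/subsetP => x; rewrite !inE => /orP[] /forallP UL; apply: contraTneq isT => Exr.
      by move: (UL r); rewrite Exr leqnn (negbTE Mri).
    by move: (UL r'); rewrite Exr le_r'r (negbTE Mr'j).
  move: (subset_leq_card UL_r) (ltn_ord r); rewrite cardsC1 card_ord cardsU UL0 cards0.
  lia.
- move=> before.
  have ULT : U :|: L = setT.
    apply/setP => x; rewrite !inE; apply/orP.
    have [Lx|] := boolP (x \in L); first by right; rewrite inE in Lx.
    rewrite inE => /forallPn[r']; rewrite negb_imply => /andP[le_r'x Mr'j].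
    left; apply/forallP => r; apply/implyP => le_xr; apply/negPn/negP => Mri.
    by have := before r r' Mri Mr'j; rewrite ltnNge (leq_trans le_r'x le_xr).
  by have [] := leq_card_setU U L; rewrite ULT cardsT card_ord.
Qed.

Lemma mstepP n (M M' : Mx n) :
  reflect (exists i j : 'I_n, [/\ j = i.+1 :> nat, col_before M i j & M' = xcol i j M])
          (mstep M M').
Proof.
apply: (iffP existsP) => [[i /existsP[j /and3P[/eqP Ej /col_beforeP before /eqP ->]]]|].
  by exists i, j.
case=> i [j [Ej /col_beforeP before ->]]; exists i; apply/existsP; exists j.
by rewrite Ej eqxx before eqxx.
Qed.

Lemma leMxx n (M : Mx n) : leM M M.
Proof. exact: connect0. Qed.

Lemma mstep_leM n (M M' : Mx n) : mstep M M' -> leM M M'.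
Proof. exact: connect1. Qed.

Lemma leM_trans n (M1 M2 M3 : Mx n) : leM M1 M2 -> leM M2 M3 -> leM M1 M3.
Proof. exact: connect_trans. Qed.

Lemma xcol_entry m n (A : 'M['I_k.+1]_(m, n)) i j r c : xcol i j A r c = A r (tperm i j c).
Proof. by rewrite mxE. Qed.

Lemma xcolK n (i j : 'I_n) : involutive (@xcol _ n n i j : Mx n -> Mx n).
Proof. by move=> A; apply/matrixP => r c; rewrite !xcol_entry tpermK. Qed.

Lemma mget_ord n (A : Mx n) (i j : 'I_n) : mget A i j = A i j.
Proof. by rewrite /mget !valK. Qed.

Lemma mget_xcol n (A : Mx n) (a a' c : 'I_n) r :
  mget (xcol a a' A) r c = mget A r (tperm a a' c).
Proof. by rewrite /mget !valK; case: insub => // r'; rewrite xcol_entry. Qed.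

Lemma mget_nz_ord n (A : Mx n) (r : nat) (a : 'I_n) :
  mget A r a != ord0 -> exists ro : 'I_n, ro = r :> nat /\ A ro a != ord0.
Proof. by rewrite /mget valK; case: insubP => // ro _ Ero nz; exists ro. Qed.

Definition nzcols n (M : Mx n) : bool := [forall j, exists i, M i j != ord0].

Lemma nzcols_xcol n (M : Mx n) i j : nzcols (xcol i j M) = nzcols M.
Proof.
have nz_xcol (A : Mx n) : nzcols A -> nzcols (xcol i j A).
  move=> /forallP nzA; apply/forallP => c; have /existsP[r Arc] := nzA (tperm i j c).
  by apply/existsP; exists r; rewrite xcol_entry.
by apply/idP/idP => /nz_xcol //; rewrite xcolK.
Qed.

Lemma leM_nzcols n (M M' : Mx n) : leM M M' -> nzcols M = nzcols M'.
Proof.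
apply: (closed_connect (a := @nzcols n)) => A A' /mstepP[i [j [_ _ ->]]].
by rewrite [RHS]nzcols_xcol.
Qed.

End Columns.

Section Shuffle.
Variables k n1 n2 : nat.
Local Notation Mx n := 'M['I_k.+1]_n.
Local Notation n := (n1 + n2).
Local Notation sh := (@shuffle_mx k n1 n2).
Implicit Types (X : {set 'I_n}) (A : Mx n1) (B : Mx n2) (N : Mx n).

Lemma shuffle_mxE X A B r c :
  sh X A B r c = if c \in X then (if r < n1 then mget A r (rk X c) else ord0)
                 else (if n1 <= r then mget B (r - n1) (rk (~: X) c) else ord0).
Proof. by rewrite mxE. Qed.

Lemma card_shuffle_setC X : #|X| = n1 -> #|~: X| = n2.
Proof. by move=> hX; have := cardsC X; rewrite hX card_ord; lia. Qed.

Lemma xcol_shuffle_l X A B (i j : 'I_n) (a a' : 'I_n1) :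
  #|X| = n1 -> j = i.+1 :> nat -> i \in X -> j \in X -> rk X i = a -> a' = a.+1 :> nat ->
  xcol i j (sh X A B) = sh X (xcol a a' A) B.
Proof.
move=> hX Ej Xi Xj Ea Ea'; apply/matrixP => r c.
rewrite xcol_entry !shuffle_mxE tperm_mem ?Xi ?Xj //.
have [Xc|nXc] := boolP (c \in X); last by rewrite tpermD // (contraNneq _ nXc) // => <-.
case: ifP => // _; have lt_c := rk_lt_card Xc; rewrite hX in lt_c.
rewrite -[rk X c]/(nat_of_ord (Ordinal lt_c)) mget_xcol.
by rewrite (rk_tperm (r := Ordinal lt_c) Ej Xi Xj Xc Ea Ea' erefl).
Qed.

Lemma xcol_shuffle_r X A B (i j : 'I_n) (a a' : 'I_n2) :
  #|X| = n1 -> j = i.+1 :> nat -> i \in ~: X -> j \in ~: X -> rk (~: X) i = a ->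
  a' = a.+1 :> nat -> xcol i j (sh X A B) = sh X A (xcol a a' B).
Proof.
move=> hX Ej Xi Xj Ea Ea'; apply/matrixP => r c.
have eXij : (i \in X) = (j \in X) by move: Xi Xj; rewrite !inE => /negbTE-> /negbTE->.
rewrite xcol_entry !shuffle_mxE tperm_mem //.
have [Xc|nXc] := boolP (c \in X).
  by rewrite tpermD //; apply: contraTneq Xc => <-; rewrite -in_setC.
case: ifP => // _; rewrite -in_setC in nXc; have lt_c := rk_lt_card nXc.
rewrite (card_shuffle_setC hX) in lt_c.
rewrite -[rk _ c]/(nat_of_ord (Ordinal lt_c)) mget_xcol.
by rewrite (rk_tperm (r := Ordinal lt_c) Ej Xi Xj nXc Ea Ea' erefl).
Qed.

Lemma xcol_shuffle_mix X A B (i j : 'I_n) : j = i.+1 :> nat -> (i \in X) != (j \in X) ->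
  xcol i j (sh X A B) = sh (tperm i j @^-1: X) A B.
Proof.
move=> Ej neX; apply/matrixP => r c; rewrite xcol_entry !shuffle_mxE [c \in _]inE.
have [Xc|nXc] := boolP (tperm i j c \in X); first by rewrite rk_preim_tperm.
rewrite -preimsetC rk_preim_tperm //; last by rewrite inE.
by rewrite !inE; case: (i \in X) neX; case: (j \in X).
Qed.

Lemma col_before_shuffle_l X A B (i j : 'I_n) (a a' : 'I_n1) :
  i \in X -> j \in X -> rk X i = a -> rk X j = a' ->
  col_before (sh X A B) i j <-> col_before A a a'.
Proof.
move=> Xi Xj Ea Ea'; split => before r r'.
  move=> Ara Ar'a'; have := before (lshift n2 r) (lshift n2 r').
  by rewrite !shuffle_mxE Xi Xj /= !ltn_ord Ea Ea' !mget_ord; apply.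
rewrite !shuffle_mxE Xi Xj Ea Ea'.
case: ifP => // _ /mget_nz_ord[ro [Ero Aro]].
case: ifP => // _ /mget_nz_ord[ro' [Ero' Aro']].
by rewrite -Ero -Ero'; apply: before.
Qed.

Lemma col_before_shuffle_r X A B (i j : 'I_n) (a a' : 'I_n2) :
  i \in ~: X -> j \in ~: X -> rk (~: X) i = a -> rk (~: X) j = a' ->
  col_before (sh X A B) i j <-> col_before B a a'.
Proof.
rewrite !inE => /negbTE Xi /negbTE Xj Ea Ea'; split => before r r'.
  move=> Bra Br'a'; have := before (rshift n1 r) (rshift n1 r').
  by rewrite !shuffle_mxE Xi Xj /= !leq_addr !addKn Ea Ea' !mget_ord ltn_add2l; apply.
rewrite !shuffle_mxE Xi Xj Ea Ea'.
case: ifP => // _ /mget_nz_ord[ro [Ero Bro]].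
case: ifP => // _ /mget_nz_ord[ro' [Ero' Bro']].
by have := before _ _ Bro Bro'; lia.
Qed.

Lemma col_before_shuffle_mix X A B (i j : 'I_n) :
  i \in X -> j \notin X -> col_before (sh X A B) i j.
Proof.
move=> Xi nXj r r'; rewrite !shuffle_mxE Xi (negbTE nXj).
by case: ifP => // ltr _; case: ifP => // ler' _; lia.
Qed.

Lemma adjacent_cols_cases X (i j : 'I_n) : #|X| = n1 -> j = i.+1 :> nat ->
  [\/ exists a a' : 'I_n1,
        [/\ i \in X, j \in X, rk X i = a, rk X j = a' & a' = a.+1 :> nat],
      exists a a' : 'I_n2,
        [/\ i \in ~: X, j \in ~: X, rk (~: X) i = a, rk (~: X) j = a' & a' = a.+1 :> nat]
    | (i \in X) != (j \in X)].
Proof.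
move=> hX Ej.
have [Xi|nXi] := boolP (i \in X); have [Xj|nXj] := boolP (j \in X); try by constructor 3.
  have lt_i := rk_lt_card Xi; have lt_j := rk_lt_card Xj; rewrite hX in lt_i lt_j.
  by constructor 1; exists (Ordinal lt_i), (Ordinal lt_j); split; rewrite //= Ej rkS Xi addn1.
rewrite -in_setC in nXi; rewrite -in_setC in nXj; have hXC := card_shuffle_setC hX.
have lt_i := rk_lt_card nXi; have lt_j := rk_lt_card nXj; rewrite hXC in lt_i lt_j.
by constructor 2; exists (Ordinal lt_i), (Ordinal lt_j); split; rewrite //= Ej rkS nXi addn1.
Qed.

Lemma mstep_from_shuffle X A B N : #|X| = n1 -> mstep (sh X A B) N ->
  exists X' A' B', [/\ #|X'| = n1, leM A A', leM B B' & N = sh X' A' B'].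
Proof.
move=> hX /mstepP[i [j [Ej before ->]]].
case: (adjacent_cols_cases hX Ej)
  => [[a [a' [Xi Xj Ea Ea' Ea1]]]|[a [a' [Xi Xj Ea Ea' Ea1]]]|neX].
- exists X, (xcol a a' A), B; split; rewrite ?leMxx ?(xcol_shuffle_l _ _ hX Ej Xi Xj Ea Ea1) //.
  apply: mstep_leM; apply/mstepP; exists a, a'; split => //.
  exact: (iffLR (col_before_shuffle_l A B Xi Xj Ea Ea') before).
- exists X, A, (xcol a a' B); split; rewrite ?leMxx ?(xcol_shuffle_r _ _ hX Ej Xi Xj Ea Ea1) //.
  apply: mstep_leM; apply/mstepP; exists a, a'; split => //.
  exact: (iffLR (col_before_shuffle_r A B Xi Xj Ea Ea') before).
- exists (tperm i j @^-1: X), A, B; split; rewrite ?leMxx ?xcol_shuffle_mix //.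
  by rewrite card_preimset //; exact: perm_inj.
Qed.

Lemma mstep_to_shuffle X A B N : #|X| = n1 -> mstep N (sh X A B) ->
  exists X' A' B', [/\ #|X'| = n1, leM A' A, leM B' B & N = sh X' A' B'].
Proof.
move=> hX /mstepP[i [j [Ej before E]]].
have {}E : N = xcol i j (sh X A B) by rewrite E xcolK.
rewrite {}E in before *.
case: (adjacent_cols_cases hX Ej)
  => [[a [a' [Xi Xj Ea Ea' Ea1]]]|[a [a' [Xi Xj Ea Ea' Ea1]]]|neX].
- rewrite (xcol_shuffle_l _ _ hX Ej Xi Xj Ea Ea1) in before *.
  exists X, (xcol a a' A), B; split; rewrite ?leMxx //.
  apply: mstep_leM; apply/mstepP; exists a, a'; rewrite xcolK; split => //.
  exact: (iffLR (col_before_shuffle_l _ B Xi Xj Ea Ea') before).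
- rewrite (xcol_shuffle_r _ _ hX Ej Xi Xj Ea Ea1) in before *.
  exists X, A, (xcol a a' B); split; rewrite ?leMxx //.
  apply: mstep_leM; apply/mstepP; exists a, a'; rewrite xcolK; split => //.
  exact: (iffLR (col_before_shuffle_r A _ Xi Xj Ea Ea') before).
- exists (tperm i j @^-1: X), A, B; split; rewrite ?leMxx ?xcol_shuffle_mix //.
  by rewrite card_preimset //; exact: perm_inj.
Qed.

Lemma mstep_shuffle_l m X A A' B : X = iset n m n1 -> m + n1 <= n ->
  mstep A A' -> mstep (sh X A B) (sh X A' B).
Proof.
move=> EX le_n /mstepP[a [a' [Ea before ->]]].
have pos (b : 'I_n1) : m + b < n by rewrite (leq_trans _ le_n) ?ltn_add2l.
have Xpos (b : 'I_n1) : Ordinal (pos b) \in X by rewrite EX inE /= leq_addr ltn_add2l ltn_ord.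
have rk_pos (b : 'I_n1) : rk X (Ordinal (pos b)) = b.
  by rewrite EX /= rk_iset // (ltnW (ltn_ord b)).
apply/mstepP; exists (Ordinal (pos a)), (Ordinal (pos a')); split.
- by rewrite /= Ea addnS.
- exact: (iffRL (col_before_shuffle_l A B (Xpos a) (Xpos a') (rk_pos a) (rk_pos a')) before).
- rewrite (xcol_shuffle_l _ _ _ _ (Xpos a) (Xpos a') (rk_pos a) Ea) ?EX ?card_iset //.
  by rewrite /= Ea addnS.
Qed.

Lemma mstep_shuffle_r m X A B B' : ~: X = iset n m n2 -> m + n2 <= n ->
  mstep B B' -> mstep (sh X A B) (sh X A B').
Proof.
move=> EX le_n /mstepP[a [a' [Ea before ->]]].
have hX : #|X| = n1 by have := cardsC X; rewrite EX card_iset // card_ord; lia.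
have pos (b : 'I_n2) : m + b < n by rewrite (leq_trans _ le_n) ?ltn_add2l.
have Xpos (b : 'I_n2) : Ordinal (pos b) \in ~: X by rewrite EX inE /= leq_addr ltn_add2l ltn_ord.
have rk_pos (b : 'I_n2) : rk (~: X) (Ordinal (pos b)) = b.
  by rewrite EX /= rk_iset // (ltnW (ltn_ord b)).
apply/mstepP; exists (Ordinal (pos a)), (Ordinal (pos a')); split.
- by rewrite /= Ea addnS.
- exact: (iffRL (col_before_shuffle_r A B (Xpos a) (Xpos a') (rk_pos a) (rk_pos a')) before).
- by rewrite (xcol_shuffle_r _ _ hX _ (Xpos a) (Xpos a') (rk_pos a) Ea) //= Ea addnS.
Qed.

Lemma leM_shuffle_l m X A A' B : X = iset n m n1 -> m + n1 <= n ->
  leM A A' -> leM (sh X A B) (sh X A' B).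
Proof.
move=> EX le_n; move: A'; apply: (connect_ind (P := fun A' => leM (sh X A B) (sh X A' B))).
  exact: leMxx.
by move=> A1 A2 le_A1 /(mstep_shuffle_l B EX le_n) /mstep_leM; apply: leM_trans.
Qed.

Lemma leM_shuffle_r m X A B B' : ~: X = iset n m n2 -> m + n2 <= n ->
  leM B B' -> leM (sh X A B) (sh X A B').
Proof.
move=> EX le_n; move: B'; apply: (connect_ind (P := fun B' => leM (sh X A B) (sh X A B'))).
  exact: leMxx.
by move=> B1 B2 le_B1 /(mstep_shuffle_r A EX le_n) /mstep_leM; apply: leM_trans.
Qed.

Lemma mstep_shuffle_swap X A B (i j : 'I_n) : j = i.+1 :> nat -> i \in X -> j \notin X ->
  mstep (sh X A B) (sh (tperm i j @^-1: X) A B).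
Proof.
move=> Ej Xi nXj; apply/mstepP; exists i, j; split => //.
  exact: col_before_shuffle_mix.
by rewrite xcol_shuffle_mix // Xi (negbTE nXj).
Qed.

Definition ov_set : {set 'I_n} := iset n 0 n1.
Definition un_set : {set 'I_n} := iset n n2 n1.

Lemma card_ov_set : #|ov_set| = n1.
Proof. exact/card_iset/leq_addr. Qed.

Lemma card_un_set : #|un_set| = n1.
Proof. by rewrite card_iset // addnC. Qed.

Lemma ov_setC : ~: ov_set = iset n n1 n2.
Proof. by apply/setP => l; rewrite !inE ltn_ord andbT -leqNgt. Qed.

Lemma un_setC : ~: un_set = iset n 0 n2.
Proof. by apply/setP => l; rewrite !inE -[n2 + n1]addnC ltn_ord andbT -ltnNge. Qed.

Lemma ov_set_adjacent X : #|X| = n1 -> X != ov_set ->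
  exists i j : 'I_n, [/\ j = i.+1 :> nat, i \notin X & j \in X].
Proof.
move=> hX neX; have cXov : #|X| = #|ov_set| by rewrite hX card_ov_set.
have [a ov_a nXa] : exists2 a, a \in ov_set & a \notin X.
  by apply: card_eq_not_subset; rewrite // eq_sym.
have [b Xb nov_b] := card_eq_not_subset cXov neX.
rewrite /ov_set !inE /= in ov_a nov_b; have lt_ab : a < b by lia.
have [|i [j [Ej nXi]]] := @adjacent_switch _ (fun l => l \notin X) a b nXa _ lt_ab.
  by rewrite negbK.
by rewrite negbK => Xj; exists i, j.
Qed.

Lemma un_set_adjacent X : #|X| = n1 -> X != un_set ->
  exists i j : 'I_n, [/\ j = i.+1 :> nat, i \in X & j \notin X].
Proof.
move=> hX neX; have cXun : #|X| = #|un_set| by rewrite hX card_un_set.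
have [a Xa nun_a] := card_eq_not_subset cXun neX.
have [b un_b nXb] : exists2 b, b \in un_set & b \notin X.
  by apply: card_eq_not_subset; rewrite // eq_sym.
rewrite /un_set !inE /= in nun_a un_b; have lt_ab : a < b by move: (ltn_ord a); lia.
by have [i [j [Ej Xi nXj]]] := @adjacent_switch _ (mem X) a b Xa nXb lt_ab; exists i, j.
Qed.

Lemma leM_ov_shuffle A B X : #|X| = n1 -> leM (sh ov_set A B) (sh X A B).
Proof.
move=> hX; have [m] := ubnP (\sum_(l in X) (l : nat)); elim: m X hX => // m IH X hX.
rewrite ltnS => sumX; have [->|neX] := eqVneq X ov_set; first exact: leMxx.
have [i [j [Ej nXi Xj]]] := ov_set_adjacent hX neX.
set Y := tperm i j @^-1: X.
have Yi : i \in Y by rewrite inE tpermL.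
have nYj : j \notin Y by rewrite inE tpermR.
have YX : tperm i j @^-1: Y = X by apply/setP => l; rewrite !inE tpermK.
have := sum_preim_tperm (fun l : 'I_n => (l : nat)) Yi nYj; rewrite YX /= Ej => sumY.
apply: leM_trans (IH Y _ _) _; first by rewrite card_preimset //; exact: perm_inj.
  by move: sumX sumY; set SX := \sum_(l in X) _; set SY := \sum_(l in Y) _; lia.
by apply: mstep_leM; rewrite -YX; apply: mstep_shuffle_swap.
Qed.

Lemma leM_shuffle_un A B X : #|X| = n1 -> leM (sh X A B) (sh un_set A B).
Proof.
move=> hX; have [m] := ubnP (\sum_(l in X) (n - l)); elim: m X hX => // m IH X hX.
rewrite ltnS => sumX; have [->|neX] := eqVneq X un_set; first exact: leMxx.
have [i [j [Ej Xi nXj]]] := un_set_adjacent hX neX.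
have := sum_preim_tperm (fun l : 'I_n => n - l) Xi nXj; rewrite /= Ej => sumY.
apply: leM_trans (mstep_leM (mstep_shuffle_swap A B Ej Xi nXj)) (IH _ _ _).
  by rewrite card_preimset //; exact: perm_inj.
move: (ltn_ord j) sumX sumY; rewrite Ej.
by set SX := \sum_(l in X) _; set SY := \sum_(l in _ @^-1: X) _; lia.
Qed.

Lemma leM_ov_shuffleP A0 B0 N : leM (sh ov_set A0 B0) N <->
  exists X A B, [/\ #|X| = n1, leM A0 A, leM B0 B & N = sh X A B].
Proof.
split; last first.
  case=> X [A [B [hX le_A le_B ->]]].
  have le_A' := leM_shuffle_l (m := 0) B0 (erefl ov_set) (leq_addr n2 n1) le_A.
  have le_B' := leM_shuffle_r A ov_setC (leqnn _) le_B.
  exact: leM_trans (leM_trans le_A' le_B') (leM_ov_shuffle A B hX).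
move: N; apply: connect_ind => [|N1 N2 [X [A [B [hX le_A le_B ->]]]]].
  by exists ov_set, A0, B0; rewrite card_ov_set !leMxx.
case/(mstep_from_shuffle hX) => [X' [A' [B' [hX' le_A' le_B' ->]]]].
by exists X', A', B'; split; rewrite // (leM_trans le_A, leM_trans le_B).
Qed.

Lemma leM_shuffle_unP A0 B0 N : leM N (sh un_set A0 B0) <->
  exists X A B, [/\ #|X| = n1, leM A A0, leM B B0 & N = sh X A B].
Proof.
split; last first.
  case=> X [A [B [hX le_A le_B ->]]].
  have le_A' := leM_shuffle_l B (erefl un_set) (eq_leq (addnC n2 n1)) le_A.
  have le_B' := leM_shuffle_r A0 (m := 0) un_setC (leq_addl n1 n2) le_B.
  exact: leM_trans (leM_shuffle_un A B hX) (leM_trans le_A' le_B').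
move: N; apply: connect_ind_r => [|N1 N2 [X [A [B [hX le_A le_B ->]]]]].
  by exists un_set, A0, B0; rewrite card_un_set !leMxx.
case/(mstep_to_shuffle hX) => [X' [A' [B' [hX' le_A' le_B' ->]]]].
by exists X', A', B'; split; rewrite // (leM_trans le_A', leM_trans le_B').
Qed.

Lemma mem_shuffle_set X A B j : nzcols A -> #|X| = n1 ->
  (j \in X) = [exists r : 'I_n, (r < n1) && (sh X A B r j != ord0)].
Proof.
move=> /forallP nzA hX; apply/idP/existsP => [Xj|[r /andP[lt_r]]].
  have lt_j := rk_lt_card Xj; rewrite hX in lt_j.
  have /existsP[r Arj] := nzA (Ordinal lt_j).
  exists (lshift n2 r); rewrite /= ltn_ord shuffle_mxE Xj /= ltn_ord.
  by rewrite -[rk X j]/(nat_of_ord (Ordinal lt_j)) mget_ord.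
by rewrite shuffle_mxE lt_r leqNgt lt_r; case: (j \in X).
Qed.

Lemma shuffle_mx_inj X X' A A' B B' : nzcols A -> nzcols A' -> #|X| = n1 -> #|X'| = n1 ->
  sh X A B = sh X' A' B' -> [/\ X = X', A = A' & B = B'].
Proof.
move=> nzA nzA' hX hX' E.
have EX : X = X'.
  by apply/setP => j; rewrite (mem_shuffle_set B j nzA hX) (mem_shuffle_set B' j nzA' hX') E.
subst X'; split => //; apply/matrixP => r c.
  have [j Xj rkj] : exists2 j, j \in X & rk X j = c by apply: rk_onto; rewrite hX.
  have := congr1 (fun M : Mx n => M (lshift n2 r) j) E.
  by rewrite !shuffle_mxE Xj /= ltn_ord rkj !mget_ord.
have [j Xj rkj] : exists2 j, j \in ~: X & rk (~: X) j = c.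
  by apply: rk_onto; rewrite card_shuffle_setC.
have := congr1 (fun M : Mx n => M (rshift n1 r) j) E; rewrite inE in Xj.
by rewrite !shuffle_mxE (negbTE Xj) /= leq_addr addKn rkj !mget_ord.
Qed.

Definition shuffle_prod (LA : seq (Mx n1)) (LB : seq (Mx n2)) : seq (Mx n) :=
  [seq sh X AB.1 AB.2 | AB <- [seq (A, B) | A <- LA, B <- LB],
                        X <- enum [set X : {set 'I_n} | #|X| == n1]].

Lemma shuffle_prodP LA LB N :
  reflect (exists X A B, [/\ #|X| = n1, A \in LA, B \in LB & N = sh X A B])
          (N \in shuffle_prod LA LB).
Proof.
apply: (iffP allpairsP) => [[[AB X] [/allpairsP[[A B] [/= LAA LBB ->]]]]|].
  by rewrite mem_enum inE => /eqP hX /= ->; exists X, A, B.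
case=> X [A [B [hX LAA LBB ->]]]; exists ((A, B), X); split => //.
  by apply/allpairsP; exists (A, B).
by rewrite mem_enum inE hX.
Qed.

Lemma shuffle_prod_uniq LA LB : uniq LA -> uniq LB -> {in LA, forall A, nzcols A} ->
  uniq (shuffle_prod LA LB).
Proof.
move=> uA uB nzA; apply: allpairs_uniq; rewrite ?enum_uniq //.
  by apply: allpairs_uniq => // -[? ?] [? ?] _ _ [-> ->].
have memE ABX : ABX \in [seq (x, y) | x <- [seq (A, B) | A <- LA, B <- LB],
                                      y <- enum [set X : {set 'I_n} | #|X| == n1]] ->
    ABX.1.1 \in LA /\ #|ABX.2| = n1.
  case/allpairsP=> [[[A B] X] [/allpairsP[[A1 B1] [/= LA1 _ [-> _]]] + ->]].
  by rewrite mem_enum inE => /eqP.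
move=> [[A B] X] [[A' B'] X'] /memE[/= LAA hX] /memE[/= LAA' hX'] /= E.
by case: (shuffle_mx_inj (nzA _ LAA) (nzA _ LAA') hX hX' E) => -> -> ->.
Qed.

Lemma perm_shuffle_prod (P : pred (Mx n1)) (Q : pred (Mx n2)) (R : pred (Mx n)) :
  (forall A, P A -> nzcols A) ->
  (forall N, R N <-> exists X A B, [/\ #|X| = n1, P A, Q B & N = sh X A B]) ->
  perm_eq (shuffle_prod [seq A <- enum (Mx n1) | P A] [seq B <- enum (Mx n2) | Q B])
          [seq N <- enum (Mx n) | R N].
Proof.
have uniq_sel (T : finType) (p : pred T) : uniq [seq x <- enum T | p x].
  by rewrite filter_uniq // enum_uniq.
have mem_sel (T : finType) (p : pred T) x : (x \in [seq y <- enum T | p y]) = p x.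
  by rewrite mem_filter mem_enum andbT.
move=> nzP RP; apply: uniq_perm; rewrite ?uniq_sel //.
  by apply: shuffle_prod_uniq; rewrite ?uniq_sel // => A; rewrite mem_sel => /nzP.
move=> N; rewrite mem_sel; apply/shuffle_prodP/idP => [|/RP].
  by case=> X [A [B [hX]]]; rewrite !mem_sel => PA QB ->; apply/RP; exists X, A, B.
by case=> X [A [B [hX PA QB ->]]]; exists X, A, B; rewrite !mem_sel.
Qed.

Lemma ov_shuffle A B :
  block_mx A (const_mx ord0 : 'M_(n1, n2)) (const_mx ord0 : 'M_(n2, n1)) B = sh ov_set A B.
Proof.
apply/matrixP => r c; rewrite shuffle_mxE ov_setC !inE add0n.
case: (split_ordP r) => r' ->; case: (split_ordP c) => c' -> /=.
- rewrite block_mxEul -[nat_of_ord c']add0n.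
  by rewrite rk_iset ?mget_ord ?leq_addr ?(ltnW (ltn_ord c')).
- by rewrite block_mxEur mxE leqNgt ltn_ord.
- by rewrite block_mxEdl mxE.
- by rewrite block_mxEdr leq_addr addKn rk_iset ?mget_ord ?(ltnW (ltn_ord c')).
Qed.

Lemma un_shuffle A B :
  castmx (erefl, addnC n2 n1)
    (block_mx (const_mx ord0 : 'M_(n1, n2)) A B (const_mx ord0 : 'M_(n2, n1)))
  = sh un_set A B.
Proof.
apply/matrixP => r c; rewrite castmxE shuffle_mxE un_setC !inE /=.
set c0 := cast_ord _ c; have -> : (c : nat) = c0 by [].
case: (split_ordP r) => r' ->; case: (split_ordP c0) => c' -> /=; rewrite cast_ord_id.
- by rewrite block_mxEul mxE (ltn_geF (ltn_ord c')) (ltn_geF (ltn_ord r')).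
- rewrite block_mxEur leq_addr ltn_add2l ltn_ord.
  by rewrite rk_iset ?mget_ord ?(ltnW (ltn_ord c')) // addnC.
- rewrite block_mxEdl (ltn_geF (ltn_ord c')) leq_addr addKn -[nat_of_ord c']add0n.
  by rewrite rk_iset ?mget_ord ?(ltnW (ltn_ord c')) // add0n leq_addl.
- by rewrite block_mxEdr mxE leq_addr ltn_add2l ltn_ord.
Qed.
End Shuffle.

Lemma pm_mul_tagged k n1 n2 (LA : seq 'M['I_k.+1]_n1) (LB : seq 'M['I_k.+1]_n2) :
  pm_mul [seq Tagged (fun n => 'M['I_k.+1]_n) A | A <- LA]
         [seq Tagged (fun n => 'M['I_k.+1]_n) B | B <- LB]
  = [seq Tagged (fun n => 'M['I_k.+1]_n) N | N <- shuffle_prod LA LB].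
Proof.
rewrite /pm_mul /allpairs allpairs_mapl allpairs_mapr /shuffle_prod map_flatten map_allpairs.
by congr flatten; rewrite map_allpairs; apply: eq_allpairs => A B; rewrite -map_comp.
Qed.

Lemma packed_nzcols k (M : pmat k) : packed M -> nzcols (tagged M).
Proof. by case/andP. Qed.

Theorem proposition2p3 (k : nat) (hk : 1 <= k) (M1 M2 : pmat k) :
  packed M1 -> packed M2 ->
  perm_eq (pm_mul (Eel M1) (Eel M2)) (Eel (ov M1 M2)) /\
  perm_eq (pm_mul (Hel M1) (Hel M2)) (Hel (un M1 M2)).
Proof.
(* Only the nonzero columns of M1 matter: they make shuffles of M1 uniquely decomposable. *)
case: M1 M2 => [n1 A0] [n2 B0] /packed_nzcols nzA0 _.
rewrite /Eel /Hel /ov /un /= !pm_mul_tagged ov_shuffle un_shuffle.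
split; apply/perm_map/perm_shuffle_prod.
- by move=> A /leM_nzcols <-.
- exact: leM_ov_shuffleP.
- by move=> A /leM_nzcols ->.
- exact: leM_shuffle_unP.
Qed.
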